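(* Let $(G,k)$ be an instance, let $v$ be a large-sparse vertex, and let $B\subseteq V\setminus\{v\}$ with $|B|\le 2k$ be such that $G-B$ has no cycle passing through $v$. Let $\mathcal{C}_{\mathrm{tree}}$ (resp. $\mathcal{C}_{\mathrm{nontree}}$) be the family of connected components of $G-v-B$ that contain a neighbor of $v$ and are trees (resp. are not trees). Assume $|\mathcal{C}_{\mathrm{tree}}|\ge 4k$ and every $C\in\mathcal{C}_{\mathrm{tree}}$ contains a vertex adjacent to some vertex of $B$. Let $B'\subseteq B$ and $\mathcal{C}'\subseteq\mathcal{C}_{\mathrm{tree}}$ be nonempty with $|B'|\le k$ such that (a) every vertex of $B$ adjacent to a vertex of some $C\in\mathcal{C}'$ lies in $B'$, and (b) there is a map assigning to each $C\in\mathcal{C}'$ a vertex of $B'$ adjacent to some vertex of $C$, such that every vertex of $B'$ is assigned to exactly two members of $\mathcal{C}'$. Let $G'$ be obtained from $G$ by deleting all edges between $v$ and $\bigcup_{C\in\mathcal{C}'}V(C)$ and then joining $v$ to each vertex of $B'$ by a double edge (two parallel edges). Then $(G,k)$ is a yes-instance if and only if $(G',k)$ is a yes-instance.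
   Context: Graphs are undirected, without self-loops, possibly with multi-edges. $N(v)$ is the set of vertices adjacent to $v$; $\rho(v)$ is the number of unordered pairs $\{u_1,u_2\}\subseteq N(v)$ joined by at least one edge. A vertex $v$ is large-sparse if $|N(v)|>7k$ and $\rho(v)\le |N(v)|(|N(v)|-1)/4$. A vertex set induces a clique if between any two distinct vertices there is exactly one edge, and a tree if it is connected and acyclic (two parallel edges form a cycle). A feasible solution is $X\subseteq V$, $|X|\le k$, with every component of $G-X$ a clique or a tree; $(G,k)$ is a yes-instance if a feasible solution exists. *)

(* Multigraphs on a finite vertex type V are given by an
   edge-multiplicity function m : V -> V -> nat (symmetric, loopless). *)
From mathcomp Require Import all_boot.
Set Implicit Arguments. Unset Strict Implicit. Unset Printing Implicit Defensive.

Section MultiGraph.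
Variable V : finType.

Definition mgraph := V -> V -> nat.

Definition is_mgraph (m : mgraph) : Prop :=
  (forall x y, m x y = m y x) /\ (forall x, m x x = 0).

Definition adj (m : mgraph) (x y : V) : bool := 0 < m x y.

Definition nbhd (m : mgraph) (v : V) : {set V} := [set u | adj m v u].

Definition rho (m : mgraph) (v : V) : nat :=
  #|[set A : {set V} | (A \subset nbhd m v) &&
       [exists x, exists y, (x != y) && (A == [set x; y]) && adj m x y]]|.

(* |N(v)| > 7k and rho(v) <= |N(v)|(|N(v)|-1)/4  (the latter multiplied by 4) *)
Definition large_sparse (m : mgraph) (k : nat) (v : V) : Prop :=
  7 * k < #|nbhd m v| /\ 4 * rho m v <= #|nbhd m v| * (#|nbhd m v| - 1).

(* A cycle of the subgraph induced by S: either two distinct vertices joined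
   by at least two parallel edges, or at least three distinct vertices
   forming a closed walk. *)
Definition is_cycle (m : mgraph) (S : {set V}) (c : seq V) : bool :=
  [&& uniq c, all (fun x => x \in S) c &
      match c with
      | [:: x; y] => 1 < m x y
      | _ => (2 < size c) && path.cycle (adj m) c
      end].

Definition restr (m : mgraph) (S : {set V}) : rel V :=
  fun x y => [&& x \in S, y \in S & adj m x y].

Definition connected_set (m : mgraph) (S : {set V}) : bool :=
  [forall x in S, forall y in S, connect (restr m S) x y].

Definition induces_clique (m : mgraph) (S : {set V}) : Prop :=
  forall x y, x \in S -> y \in S -> x != y -> m x y = 1.

Definition induces_tree (m : mgraph) (S : {set V}) : Prop :=
  S != set0 /\ connected_set m S /\ ~ (exists c, is_cycle m S c).

(* C is (the vertex set of) a connected component of G - X *)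
Definition is_comp (m : mgraph) (X C : {set V}) : Prop :=
  [/\ C != set0, [disjoint C & X], connected_set m C &
      forall x y, x \in C -> y \notin C -> y \notin X -> ~~ adj m x y].

Definition feasible (m : mgraph) (k : nat) (X : {set V}) : Prop :=
  #|X| <= k /\
  forall C, is_comp m X C -> induces_clique m C \/ induces_tree m C.

Definition yes_instance (m : mgraph) (k : nat) : Prop :=
  exists X, feasible m k X.

Definition in_Ctree (m : mgraph) (v : V) (B C : {set V}) : Prop :=
  [/\ is_comp m (v |: B) C, (exists u, u \in C /\ adj m v u) & induces_tree m C].

Definition modify (m : mgraph) (v : V) (C' : {set {set V}}) (B' : {set V})
  : mgraph :=
  fun x y =>
    let U := \bigcup_(C in C') C in
    if ((x == v) && (y \in U)) || ((y == v) && (x \in U)) then 0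
    else if ((x == v) && (y \in B')) || ((y == v) && (x \in B'))
         then m x y + 2
         else m x y.

End MultiGraph.

From mathcomp Require Import all_boot zify.
Set Implicit Arguments. Unset Strict Implicit. Unset Printing Implicit Defensive.

(* Each component in C' is a tree that touches v in exactly one vertex (a second
   one would close a cycle through v avoiding B) and touches B only inside B'.

   Forward: let X solve (G, k) with v outside X. Each b in B' \ X has an assigned
   component meeting X; otherwise v, b and its two assigned components lie in one
   component of G - X that is neither a clique (the two neighbours of v are not
   adjacent) nor a tree (it has a cycle through v and b). Charging b to such a
   vertex of X shows that X' := (X minus the vertices of C') plus B' is no larger
   than X, and X' solves (G', k): a component of G' - X' meeting C' lies inside
   one tree of C', and any other one lies inside a component of G - X.

   Backward: let X' solve (G', k) with v outside X'. The double edges force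
   B' into X'. The component E of v in G' - X' is not a clique: its vertices
   adjacent to v outside B span, together with v, a cycle avoiding B once there
   are two of them, so v would have at most 1 + k + 2k + 2|B'| <= 5k + 1 < 7k
   neighbours in G. Hence E is a tree, and so is the component of v in G - X':
   a cycle avoiding C' lives in E, while a cycle meeting some C in C' stays in
   C + v, contradicting that C is a tree or that G - B has no cycle through v. *)

Section Paths.
Variables (T : eqType) (r : rel T).

Lemma path_all_closed (P : pred T) x p :
  path r x p -> P x -> (forall a b, P a -> r a b -> P b) -> all P p.
Proof.
elim: p x => //= y p IH x /andP[rxy pp] Px H.
have Py : P y by exact: H rxy.
by rewrite Py (IH y).
Qed.

Lemma path_constant (P Q : pred T) x p :
  path r x p -> all Q (x :: p) ->
  (forall a b, Q a -> Q b -> r a b -> P a = P b) ->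
  {in x :: p, forall y, P y = P x}.
Proof.
elim: p x => [|y p IH] x /=; first by move=> _ _ _ y; rewrite inE => /eqP->.
move=> /andP[rxy pp] /and3P[Qx Qy Qp] H z; rewrite inE => /orP[/eqP->//|zp].
have Pyx : P y = P x by rewrite (H x y).
by rewrite -Pyx; apply: IH => //=; rewrite ?Qy.
Qed.

Lemma cycle_path_avoiding (c : seq T) v z :
  cycle r c -> uniq c -> z \in c -> z != v ->
  exists x s, path r x s /\ x :: s =i [predD1 c & v].
Proof.
move=> cyc uc zc zv; case: (boolP (v \in c)) => vc.
  have [i [|x s] eis] := rot_to vc.
    by move: zc zv; rewrite -(mem_rot i) eis inE => ->.
  have := cyc; rewrite -(rot_cycle i) eis /= rcons_path => /and3P[_ ps _].
  have := uc; rewrite -(rot_uniq i) eis => /andP[vs _].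
  exists x, s; split=> // y; rewrite [RHS]inE -(mem_rot i c) eis [y \in v :: _]in_cons.
  by case: eqP => [->|]; [rewrite (negbTE vs)|].
have [i s eis] := rot_to zc.
have := cyc; rewrite -(rot_cycle i) eis /= rcons_path => /andP[ps _].
exists z, s; split=> // y; rewrite [RHS]inE -eis mem_rot.
by case: eqP => // ->; rewrite (negbTE vc).
Qed.

End Paths.

Section Multigraph.
Variables (V : finType) (m : mgraph V).

Lemma adj_sym : is_mgraph m -> forall x y, adj m x y = adj m y x.
Proof. by move=> [sm _] x y; rewrite /adj sm. Qed.

Lemma adj_irr : is_mgraph m -> forall x, adj m x x = false.
Proof. by move=> [_ lm] x; rewrite /adj lm. Qed.

Lemma path_restr_mem S x p : path (restr m S) x p -> all [in S] p.
Proof. by elim: p x => //= y p IH x /andP[/and3P[_ -> _] /IH]. Qed.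

Lemma path_restr_adj S x p : path (restr m S) x p -> path (adj m) x p.
Proof. by apply: sub_path => a b /and3P[]. Qed.

Lemma connected_set_connect S x y :
  connected_set m S -> x \in S -> y \in S -> connect (restr m S) x y.
Proof. by move=> /forall_inP/(_ x) H xS yS; apply: (forall_inP (H xS)). Qed.

Lemma connected_set_uniq_path S x y :
  connected_set m S -> x \in S -> y \in S ->
  exists p, [/\ path (restr m S) x p, uniq (x :: p) & last x p = y].
Proof.
move=> cS xS yS; have /connectP[p pp ->] := connected_set_connect cS xS yS.
by case: (shortenP pp) => p' pp' up' _; exists p'.
Qed.

Lemma connected_set_closed S (P : pred V) x :
  connected_set m S -> x \in S -> P x ->
  (forall a b, P a -> a \in S -> b \in S -> adj m a b -> P b) ->
  {in S, forall y, P y}.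
Proof.
move=> cS xS Px H y yS.
have /connectP[p pp ->] := connected_set_connect cS xS yS.
have : all (fun z => (z \in S) && P z) (x :: p).
  rewrite /= xS Px; apply: (path_all_closed pp); first by rewrite xS.
  by move=> a b /andP[aS Pa] /and3P[_ bS ab]; rewrite bS (H a b).
by move=> /allP /(_ _ (mem_last x p)) /andP[].
Qed.

Section Components.
Variable X : {set V}.

Lemma comp_notin C y : is_comp m X C -> y \in C -> y \notin X.
Proof. by case=> _ /disjointFr dCX _ _ /dCX ->. Qed.

Lemma comp_adj_closed C a b :
  is_comp m X C -> a \in C -> adj m a b -> b \notin X -> b \in C.
Proof.
case=> _ _ _ H aC ab bX; apply/negPn/negP => bC.
by move: (H a b aC bC bX); rewrite ab.
Qed.

Lemma comp_subset C (S : {set V}) x :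
  is_comp m X C -> {in S, forall y, y \notin X} -> connected_set m S ->
  x \in S -> x \in C -> {subset S <= C}.
Proof.
move=> cC SX cS xS xC; apply: (connected_set_closed cS xS xC) => a b aC _ bS ab.
exact: comp_adj_closed cC aC ab (SX _ bS).
Qed.

Lemma comp_eq C1 C2 y :
  is_comp m X C1 -> is_comp m X C2 -> y \in C1 -> y \in C2 -> C1 = C2.
Proof.
move=> c1 c2 y1 y2; apply/eqP; rewrite eqEsubset; apply/andP; split; apply/subsetP.
- by apply: (comp_subset c2 _ _ y1 y2); [move=> z; apply: comp_notin c1 | case: c1].
- by apply: (comp_subset c1 _ _ y2 y1); [move=> z; apply: comp_notin c2 | case: c2].
Qed.

Definition comp_of x := [set y | connect (restr m (~: X)) x y].

Lemma mem_comp_of x : x \in comp_of x.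
Proof. by rewrite inE connect0. Qed.

Lemma comp_of_is_comp x : is_mgraph m -> x \notin X -> is_comp m X (comp_of x).
Proof.
move=> mG xX; set K := comp_of x.
have notX y : y \in K -> y \notin X.
  rewrite inE => /connectP[p pp ->]; case/lastP: p pp => // q z.
  by move/path_restr_mem; rewrite last_rcons all_rcons inE => /andP[].
have stepK a b : a \in K -> restr m (~: X) a b -> b \in K.
  by rewrite !inE => xa ab; apply: connect_trans xa (connect1 ab).
have pathK a p : a \in K -> path (restr m (~: X)) a p -> path (restr m K) a p.
  elim: p a => //= b p IH a aK /andP[ab pp]; have bK := stepK _ _ aK ab.
  by rewrite /restr aK bK (IH b bK pp) andbT; case/and3P: ab.
have connK w : w \in K -> connect (restr m K) x w.
  rewrite inE => /connectP[p pp ->]; apply/connectP; exists p => //.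
  by apply: pathK pp; exact: mem_comp_of.
have symK : symmetric (restr m K).
  by move=> a b; rewrite /restr (adj_sym mG a b) andbCA.
split.
- by apply/set0Pn; exists x; exact: mem_comp_of.
- by rewrite disjoint_subset; apply/subsetP => y /notX; rewrite inE.
- apply/forall_inP => y yK; apply/forall_inP => z zK.
  by apply: connect_trans (connK z zK); rewrite (sym_connect_sym symK) connK.
- move=> a b aK bK bX; apply/negP => ab; move/negP: bK; apply; apply: (stepK _ _ aK).
  by rewrite /restr !inE ab bX (notX a aK).
Qed.

End Components.

Lemma is_cycle_cycle S c : is_mgraph m -> is_cycle m S c -> cycle (adj m) c.
Proof.
move=> [sm _] /and3P[_ _]; case: c => [|x [|y [|z c]]] //= H.
by rewrite /adj andbT (sm y x); apply/andP; split; apply: leq_trans H.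
Qed.

Lemma is_cycle_uniq S c : is_cycle m S c -> uniq c.
Proof. by case/and3P. Qed.

Lemma is_cycle_mem (S : {set V}) c : is_cycle m S c -> all [in S] c.
Proof. by case/and3P. Qed.

Lemma is_cycle_widen (S T : {set V}) c : is_cycle m S c -> all [in T] c -> is_cycle m T c.
Proof. by move=> /and3P[u _ H] a; rewrite /is_cycle u a H. Qed.

Lemma is_cycle_cons (S : {set V}) v l :
  uniq (v :: l) -> path (adj m) v l -> adj m (last v l) v -> 1 < size l ->
  all [in S] (v :: l) -> is_cycle m S (v :: l).
Proof.
move=> u p lv sz a; rewrite /is_cycle u a /=.
case: l u p lv sz a => [|x [|y l]] //= u /and3P[-> -> pl] lv _ _.
by rewrite rcons_path pl lv.
Qed.

Lemma clique_sub (S T : {set V}) :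
  {subset S <= T} -> induces_clique m T -> induces_clique m S.
Proof. by move=> ST cl x y /ST xT /ST yT; apply: cl. Qed.

Lemma tree_sub (S T : {set V}) : {subset S <= T} -> S != set0 -> connected_set m S ->
  induces_tree m T -> induces_tree m S.
Proof.
move=> ST ne cS [_ [_ nc]]; split=> //; split=> // -[c cc]; apply: nc; exists c.
by apply: (is_cycle_widen cc); apply/allP => y /(allP (is_cycle_mem cc))/ST.
Qed.

Lemma cycle_through_connected (S C : {set V}) v a c :
  connected_set m C -> v \notin C -> a \in C -> c \in C -> a != c ->
  adj m v a -> adj m c v -> {subset C <= S} -> v \in S ->
  exists2 cy, is_cycle m S cy & v \in cy.
Proof.
move=> cC vC aC cC' ac va cv CS vS.
have [p [pp up lp]] := connected_set_uniq_path cC aC cC'.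
have /allP pC := path_restr_mem pp.
have apC z : z \in a :: p -> z \in C by rewrite inE => /predU1P[->|/pC].
have apS : all [in S] (a :: p) by apply/allP => z /apC/CS.
exists (v :: a :: p); last exact: mem_head.
apply: is_cycle_cons.
- by rewrite cons_uniq up andbT; apply/negP => /apC; apply/negP.
- by rewrite /= va (path_restr_adj pp).
- by rewrite /= lp.
- by case: p {pp up apC pC apS} lp => [/= ac'|] //; rewrite ac' eqxx in ac.
- by apply/andP.
Qed.

Lemma cycle_through_two_connected (S C1 C2 : {set V}) v b x1 y1 y2 x2 :
  connected_set m C1 -> connected_set m C2 -> [disjoint C1 & C2] ->
  v \notin C1 -> v \notin C2 -> b \notin C1 -> b \notin C2 -> v != b ->
  x1 \in C1 -> y1 \in C1 -> y2 \in C2 -> x2 \in C2 ->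
  adj m v x1 -> adj m y1 b -> adj m b y2 -> adj m x2 v ->
  {subset C1 <= S} -> {subset C2 <= S} -> v \in S -> b \in S ->
  exists2 cy, is_cycle m S cy & v \in cy.
Proof.
move=> c1 c2 d vC1 vC2 bC1 bC2 vb x1C y1C y2C x2C vx1 y1b by2 x2v S1 S2 vS bS.
have [p [pp up lp]] := connected_set_uniq_path c1 x1C y1C.
have [q [qq uq lq]] := connected_set_uniq_path c2 y2C x2C.
have /allP pC := path_restr_mem pp; have /allP qC := path_restr_mem qq.
have inC1 z : z \in x1 :: p -> z \in C1 by rewrite inE => /predU1P[->|/pC].
have inC2 z : z \in y2 :: q -> z \in C2 by rewrite inE => /predU1P[->|/qC].
have notC1 z : z \notin C1 -> z \notin x1 :: p by apply: contra => /inC1.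
have notC2 z : z \notin C2 -> z \notin y2 :: q by apply: contra => /inC2.
exists (v :: (x1 :: p) ++ b :: y2 :: q); last exact: mem_head.
apply: is_cycle_cons => //.
- have ub : uniq (b :: y2 :: q) by rewrite cons_uniq uq notC2.
  rewrite cons_uniq cat_uniq up ub !andbT mem_cat negb_or notC1 //.
  rewrite in_cons negb_or vb notC2 //; apply/hasPn => z.
  rewrite inE => /predU1P[->|/inC2 zC2]; first exact: notC1.
  by apply: notC1; rewrite (disjointFl d zC2).
- rewrite /= vx1 cat_path (path_restr_adj pp) /= lp y1b by2 /=.
  exact: path_restr_adj qq.
- by rewrite last_cat /= lq.
- by rewrite size_cat /= addnS.
- apply/allP => z; rewrite in_cons mem_cat in_cons.
  by case/or4P=> [/eqP->|/inC1/S1|/eqP->|/inC2/S2].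
Qed.

End Multigraph.

Definition agree (V : finType) (m m' : mgraph V) (S : {set V}) :=
  {in S &, forall x y, m x y = m' x y}.

Lemma agree_sym (V : finType) (m m' : mgraph V) S : agree m m' S -> agree m' m S.
Proof. by move=> ag x y xS yS; rewrite ag. Qed.

Lemma agree_sub (V : finType) (m m' : mgraph V) (S T : {set V}) :
  agree m m' S -> {subset T <= S} -> agree m m' T.
Proof. by move=> ag TS x y /TS xS /TS yS; apply: ag. Qed.

Section Agreement.
Variables (V : finType) (m m' : mgraph V) (S : {set V}).
Hypothesis ag : agree m m' S.

Lemma connected_set_agree : connected_set m S -> connected_set m' S.
Proof.
move=> cS; have e : restr m S =2 restr m' S.
  move=> x y; rewrite /restr; case xS: (x \in S); case yS: (y \in S) => //=.
  by rewrite /adj ag.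
apply/forall_inP => x xS; apply/forall_inP => y yS.
by rewrite -(eq_connect e) connected_set_connect.
Qed.

Lemma is_cycle_agree c : is_cycle m S c -> is_cycle m' S c.
Proof.
move=> /and3P[u a H]; rewrite /is_cycle u a.
have E : cycle (adj m) c = cycle (adj m') c.
  by apply: (@eq_in_cycle _ [in S]) => // p q pS qS; rewrite /adj ag.
case: c u a H E => [|x [|y [|z c]]] // _; last by move=> _ H <-.
by move=> /and3P[xS yS _]; rewrite ag.
Qed.

Lemma clique_agree : induces_clique m S -> induces_clique m' S.
Proof. by move=> cl x y xS yS xy; rewrite -ag // cl. Qed.

End Agreement.

Lemma tree_agree (V : finType) (m m' : mgraph V) S :
  agree m m' S -> induces_tree m S -> induces_tree m' S.
Proof.
move=> ag [ne [cS nc]]; split=> //; split; first exact: connected_set_agree cS.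
by move=> [c cc]; apply: nc; exists c; apply: is_cycle_agree cc; apply: agree_sym.
Qed.

Lemma is_comp_agree (V : finType) (m m' : mgraph V) (X D : {set V}) :
  agree m m' D -> (forall x y, x \in D -> y \notin X -> adj m' x y -> adj m x y) ->
  is_comp m X D -> is_comp m' X D.
Proof.
move=> ag out [ne dis cD bd]; split=> //; first exact: connected_set_agree cD.
by move=> x y xD yD yX; apply: contraNN (bd x y xD yD yX); apply: out.
Qed.

Lemma feasible_agree (V : finType) (m m' : mgraph V) k (X : {set V}) :
  agree m m' (~: X) -> feasible m k X -> feasible m' k X.
Proof.
move=> ag [cardX H]; split=> // C cC.
have CX : {subset C <= ~: X} by move=> y /(comp_notin cC); rewrite inE.
have agC := agree_sub ag CX.
have cC0 : is_comp m X C.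
  apply: is_comp_agree (agree_sym agC) _ cC => x y xC yX.
  by rewrite /adj ag //; [exact: CX | rewrite inE].
by case: (H C cC0) => [/(clique_agree agC)|/(tree_agree agC)]; [left|right].
Qed.

Lemma leq_card_inj_on (V W : finType) (f : V -> W) (A : {set V}) (B : {set W}) :
  {in A &, injective f} -> {in A, forall x, f x \in B} -> #|A| <= #|B|.
Proof.
move=> inj fAB; rewrite -(card_in_imset inj); apply: subset_leq_card.
by apply/subsetP => y /imsetP[x xA ->]; exact: fAB.
Qed.

Lemma card_uniform_fibres (V W : finType) (f : V -> W) (A : {set V}) (B : {set W}) n :
  {in A, forall x, f x \in B} -> {in B, forall b, #|[set x in A | f x == b]| = n} ->
  #|A| = #|B| * n.
Proof.
move=> fAB fib; rewrite -sum1_card (partition_big f [in B]) //=.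
rewrite -sum_nat_const; apply: eq_bigr => b bB.
by rewrite sum1dep_card -(fib b bB); apply: eq_card => x; rewrite !inE.
Qed.

Section Modify.
Context {V : finType} {m : mgraph V} {v : V} {C' : {set {set V}}} {B' : {set V}}.
Local Notation U := (\bigcup_(C in C') C).

Lemma modify_off_v x y : x != v -> y != v -> modify m v C' B' x y = m x y.
Proof. by move=> /negbTE xv /negbTE yv; rewrite /modify xv yv. Qed.

Lemma modify_off x y :
  x \notin U -> y \notin U -> x \notin B' -> y \notin B' -> modify m v C' B' x y = m x y.
Proof.
by move=> /negbTE xU /negbTE yU /negbTE xB /negbTE yB; rewrite /modify xU yU xB yB !andbF.
Qed.

Lemma modify_U x : x \in U -> modify m v C' B' v x = 0 /\ modify m v C' B' x v = 0.
Proof. by move=> xU; rewrite /modify xU eqxx orbT. Qed.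

Lemma modify_B' x :
  x \in B' -> x \notin U -> v \notin U -> modify m v C' B' v x = m v x + 2.
Proof. by move=> xB /negbTE xU /negbTE vU; rewrite /modify xU vU eqxx xB !andbF. Qed.

Lemma modify_mgraph :
  is_mgraph m -> v \notin U -> v \notin B' -> is_mgraph (modify m v C' B').
Proof.
move=> [sm lm] vU vB; split=> [x y|x]; rewrite /modify.
  by rewrite sm; case: (x == v); case: (y == v); case: (x \in U); case: (y \in U);
    case: (x \in B'); case: (y \in B').
by case: eqP => [->|]; rewrite ?(negbTE vU) ?(negbTE vB) ?lm.
Qed.

Lemma agree_modify_off_v (S : {set V}) : v \notin S -> agree m (modify m v C' B') S.
Proof.
by move=> vS x y xS yS; rewrite modify_off_v //; apply: contraNneq vS => <-.
Qed.

Lemma agree_modify_off (S : {set V}) :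
  {in S, forall y, (y \notin U) && (y \notin B')} -> agree m (modify m v C' B') S.
Proof.
by move=> SUB x y /SUB/andP[xU xB] /SUB/andP[yU yB]; rewrite modify_off.
Qed.

End Modify.

Section Reduction.
Variables (V : finType) (m : mgraph V) (k : nat) (v : V).
Variables (B : {set V}) (Ctree : {set {set V}}) (B' : {set V}) (C' : {set {set V}}).
Variable f : {set V} -> V.

Hypothesis mG : is_mgraph m.
Hypothesis vNB : v \notin B.
Hypothesis no_cycle_v : ~ (exists c, is_cycle m (~: B) c /\ v \in c).
Hypothesis CtreeP : forall C, C \in Ctree <-> in_Ctree m v B C.
Hypothesis B'B : B' \subset B.
Hypothesis C'Ctree : C' \subset Ctree.
Hypothesis C'_nbr_B : forall C x b, C \in C' -> x \in C -> b \in B -> adj m x b -> b \in B'.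
Hypothesis fP : forall C, C \in C' -> f C \in B' /\ exists x, x \in C /\ adj m (f C) x.
Hypothesis f_fibres : forall b, b \in B' -> #|[set C in C' | f C == b]| = 2.

Local Notation U := (\bigcup_(C in C') C).
Local Notation m' := (modify m v C' B').

Lemma C'_tree_comp C : C \in C' ->
  [/\ is_comp m (v |: B) C, induces_tree m C, v \notin C & {in B, forall b, b \notin C}].
Proof.
move=> /(subsetP C'Ctree) /CtreeP[cC _ tC]; split=> // [|b bB].
  by apply/negP => /(comp_notin cC); rewrite !inE eqxx.
by apply/negP => /(comp_notin cC); rewrite !inE bB orbT.
Qed.

Lemma C'_v_nbr C : C \in C' -> exists2 x, x \in C & adj m v x.
Proof. by move=> /(subsetP C'Ctree) /CtreeP[_ [x [xC vx]] _]; exists x. Qed.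

Lemma C'_eq C1 C2 y : C1 \in C' -> C2 \in C' -> y \in C1 -> y \in C2 -> C1 = C2.
Proof.
by move=> /C'_tree_comp[c1 _ _ _] /C'_tree_comp[c2 _ _ _]; apply: (comp_eq c1 c2).
Qed.

Lemma v_notin_U : v \notin U.
Proof. by apply/bigcupP => -[C /C'_tree_comp[_ _ /negP vC _]]. Qed.

Lemma B_notin_U b : b \in B -> b \notin U.
Proof. by move=> bB; apply/bigcupP => -[C /C'_tree_comp[_ _ _ /(_ b bB)/negP bC]]. Qed.

Lemma v_notin_B' : v \notin B'.
Proof. by apply: contra vNB => /(subsetP B'B). Qed.

Definition owner y := odflt set0 [pick C in C' | y \in C].

Lemma owner_eq C y : C \in C' -> y \in C -> owner y = C.
Proof.
move=> CC yC; rewrite /owner; case: pickP => [D /andP[DC yD] /=|/(_ C)].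
  exact: C'_eq DC CC yD yC.
by rewrite CC yC.
Qed.

Lemma owner_U y : y \in U -> owner y \in C' /\ y \in owner y.
Proof. by case/bigcupP => C CC yC; rewrite (owner_eq CC yC). Qed.

Lemma C'_v_nbr_unique C a c :
  C \in C' -> a \in C -> c \in C -> adj m v a -> adj m v c -> a = c.
Proof.
move=> /C'_tree_comp[_ [_ [cC _]] vC BC] aC cC' va vc; apply/eqP/negPn/negP => ac.
apply: no_cycle_v; have [cy ??] : exists2 cy, is_cycle m (~: B) cy & v \in cy.
  apply: (cycle_through_connected cC vC aC cC' ac va); last by rewrite inE.
    by rewrite adj_sym.
  by move=> y yC; rewrite inE (contraL (BC y) yC).
by exists cy.
Qed.

Lemma card_C' : #|C'| = 2 * #|B'|.
Proof. by rewrite mulnC (card_uniform_fibres (fun C CC => proj1 (fP CC)) f_fibres). Qed.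

Lemma card_nbhd_U : #|nbhd m v :&: U| <= 2 * #|B'|.
Proof.
rewrite -card_C'; apply: (leq_card_inj_on (f := owner)) => [y1 y2|y].
  rewrite !inE => /andP[v1 /owner_U[C1 y1C]] /andP[v2 /owner_U[_ y2C]] e.
  by rewrite e in y1C C1; apply: C'_v_nbr_unique C1 y1C y2C v1 v2.
by rewrite inE => /andP[_ /owner_U[]].
Qed.

Lemma C'_nonadj C1 C2 x1 x2 :
  C1 \in C' -> C2 \in C' -> C1 != C2 -> x1 \in C1 -> x2 \in C2 -> ~~ adj m x1 x2.
Proof.
move=> C1C C2C C12 x1C x2C; have [[_ _ _ bd] _ _ _] := C'_tree_comp C1C.
apply: bd x1C _ _; first by apply: contra C12 => x2C1; rewrite (C'_eq C1C C2C x2C1 x2C).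
by have [c2 _ _ _] := C'_tree_comp C2C; exact: comp_notin c2 x2C.
Qed.

Lemma comp_sub_C' (X' D C : {set V}) x :
  B' \subset X' -> is_comp m' X' D -> C \in C' -> x \in D -> x \in C -> {subset D <= C}.
Proof.
move=> B'X' cD CC xD xC; have [[_ _ _ bd] _ vC _] := C'_tree_comp CC.
have [_ _ conD _] := cD.
apply: (connected_set_closed conD xD xC) => a b aC _ bD ab; apply/negPn/negP => bC.
have aU : a \in U by apply/bigcupP; exists C.
have [bv|bv] := eqVneq b v.
  by move: ab; rewrite /adj bv (modify_U aU).2.
have av : a != v by apply: contraNneq vC => <-.
move: ab; rewrite /adj modify_off_v // -/(adj m a b) => ab.
have bB : b \in B.
  apply: contraTT ab => bNB; apply: bd aC bC _.
  by rewrite !inE negb_or bv.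
by move: (comp_notin cD bD); rewrite (subsetP B'X') // (C'_nbr_B CC aC bB ab).
Qed.

Lemma comp_meeting_U_tree (X' D C : {set V}) x :
  B' \subset X' -> is_comp m' X' D -> C \in C' -> x \in D -> x \in C -> induces_tree m' D.
Proof.
move=> B'X' cD CC xD xC; have DC := comp_sub_C' B'X' cD CC xD xC.
have [_ trC vC _] := C'_tree_comp CC; have [Dne _ conD _] := cD.
have agD : agree m m' D by apply: agree_modify_off_v; apply: contra vC => /DC.
apply: (tree_agree agD (tree_sub DC Dne _ trC)).
exact: connected_set_agree (agree_sym agD) conD.
Qed.

Section Forward.
Variable X : {set V}.
Hypotheses (feasX : feasible m k X) (vNX : v \notin X).

Lemma C'_sub_comp_v C : C \in C' -> {in C, forall y, y \notin X} ->
  {subset C <= comp_of m X v}.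
Proof.
move=> CC CX; have [x xC vx] := C'_v_nbr CC.
have [cC _ _ _] := C'_tree_comp CC; have [_ _ conC _] := cC.
have cE := comp_of_is_comp mG vNX.
apply: (comp_subset cE CX conC xC).
exact: comp_adj_closed cE (mem_comp_of m X v) vx (CX x xC).
Qed.

Lemma C'_pair_meets_X C1 C2 b :
  C1 \in C' -> C2 \in C' -> C1 != C2 -> f C1 = b -> f C2 = b -> b \notin X ->
  ~ ({in C1, forall y, y \notin X} /\ {in C2, forall y, y \notin X}).
Proof.
move=> C1C C2C C12 f1 f2 bX [C1X C2X].
have [[_ _ conC1 _] _ vC1 BC1] := C'_tree_comp C1C.
have [[_ _ conC2 _] _ vC2 BC2] := C'_tree_comp C2C.
have [x1 x1C vx1] := C'_v_nbr C1C; have [x2 x2C vx2] := C'_v_nbr C2C.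
have [bB' [y1 [y1C by1]]] := fP C1C; have [_ [y2 [y2C by2]]] := fP C2C.
rewrite f1 in bB' by1; rewrite f2 in by2.
have E1 := C'_sub_comp_v C1C C1X; have E2 := C'_sub_comp_v C2C C2X.
have cE := comp_of_is_comp mG vNX; have vE := mem_comp_of m X v.
have bB : b \in B by apply: (subsetP B'B).
have bE : b \in comp_of m X v.
  by apply: comp_adj_closed cE (E1 _ y1C) _ bX; rewrite adj_sym.
have [_ /(_ _ cE)[cl|[_ [_ nc]]]] := feasX.
  have x12 : x1 != x2.
    by apply: contraNneq C12 => ex; apply/eqP; apply: (C'_eq C1C C2C x1C); rewrite ex.
  by move: (C'_nonadj C1C C2C C12 x1C x2C); rewrite /adj (cl x1 x2 (E1 _ x1C) (E2 _ x2C) x12).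
have d12 : [disjoint C1 & C2].
  rewrite disjoint_subset; apply/subsetP => z z1; rewrite inE.
  by apply/negP => z2; move/eqP: C12; apply; apply: C'_eq C1C C2C z1 z2.
have vb : v != b by apply: contraNneq vNB => ->.
apply: nc; have [cy cyc _] := cycle_through_two_connected conC1 conC2 d12 vC1 vC2
  (BC1 b bB) (BC2 b bB) vb x1C y1C y2C x2C vx1 (etrans (adj_sym mG _ _) by1) by2
  (etrans (adj_sym mG _ _) vx2) E1 E2 vE bE.
by exists cy.
Qed.

Lemma assigned_C'_meets_X b :
  b \in B' -> b \notin X -> exists2 y, y \in X :&: U & f (owner y) = b.
Proof.
move=> bB' bX; case: (boolP [exists y in X :&: U, f (owner y) == b]).
  by case/exists_inP => y yXU /eqP; exists y.
move=> /exists_inPn none; exfalso.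
have CX C : C \in C' -> f C = b -> {in C, forall y, y \notin X}.
  move=> CC fC y yC; apply/negP => yX.
  have /none : y \in X :&: U by rewrite inE yX; apply/bigcupP; exists C.
  by rewrite (owner_eq CC yC) fC eqxx.
have /eqP/cards2P[C1 [C2 [C12 eC]]] := f_fibres bB'.
have : (C1 \in [set C in C' | f C == b]) && (C2 \in [set C in C' | f C == b]).
  by rewrite eC !inE !eqxx orbT.
rewrite !inE => /andP[/andP[C1C /eqP f1] /andP[C2C /eqP f2]].
by apply: (C'_pair_meets_X C1C C2C C12 f1 f2 bX); split; apply: CX.
Qed.

Lemma card_forward_solution : #|(X :\: U) :|: B'| <= k.
Proof.
have [cardX _] := feasX.
have B'X : B' :\: X \subset [set f (owner y) | y in X :&: U].
  apply/subsetP => b; rewrite inE => /andP[bX bB'].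
  by have [y yXU <-] := assigned_C'_meets_X bB' bX; apply: imset_f.
have sub : (X :\: U) :|: B' \subset (X :\: U) :|: (B' :\: X).
  apply/subsetP => y; rewrite !inE; case: (boolP (y \in B')) => [yB'|_]; last by rewrite !andbF.
  by rewrite (negbTE (B_notin_U (subsetP B'B y yB'))); case: (y \in X).
apply: leq_trans (subset_leq_card sub) _; apply: leq_trans (leq_card_setU _ _) _.
apply: leq_trans cardX; rewrite -(cardsID U X) [#|X :&: U| + _]addnC leq_add2l.
exact: leq_trans (subset_leq_card B'X) (leq_imset_card _ _).
Qed.

Lemma comp_avoiding_U (D : {set V}) :
  is_comp m' ((X :\: U) :|: B') D -> {in D, forall y, y \notin U} ->
  induces_clique m' D \/ induces_tree m' D.
Proof.
move=> cD DU; have [Dne _ conD _] := cD.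
have DX y : y \in D -> (y \notin X) && (y \notin B').
  move=> yD; move: (comp_notin cD yD).
  by rewrite !inE (negbTE (DU y yD)) negb_or.
have agD : agree m m' D.
  by apply: agree_modify_off => y yD; rewrite DU //; case/andP: (DX y yD).
have conDm := connected_set_agree (agree_sym agD) conD.
have [x xD] := set0Pn _ Dne.
have cE := comp_of_is_comp mG (proj1 (andP (DX x xD))).
have DE : {subset D <= comp_of m X x}.
  by apply: (comp_subset cE _ conDm xD (mem_comp_of m X x)) => y /DX/andP[].
have [_ /(_ _ cE)[cl|tr]] := feasX; [left|right].
  exact: clique_agree agD (clique_sub DE cl).
exact: tree_agree agD (tree_sub DE Dne conDm tr).
Qed.

Lemma forward_solution : yes_instance m' k.
Proof.
exists ((X :\: U) :|: B'); split=> [|D cD]; first exact: card_forward_solution.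
case: (boolP [exists x in D, x \in U]) => [/exists_inP[x xD /bigcupP[C CC xC]]|].
  by right; apply: comp_meeting_U_tree (subsetUr _ _) cD CC xD xC.
by move=> /exists_inPn DU; apply: comp_avoiding_U.
Qed.

End Forward.

Lemma yes_instance_modify : yes_instance m k -> yes_instance m' k.
Proof.
move=> [X feasX]; case: (boolP (v \in X)) => vX; last exact: forward_solution feasX vX.
exists X; apply: feasible_agree feasX; apply: agree_modify_off_v.
by rewrite inE vX.
Qed.

Hypothesis large_nbhd : 7 * k < #|nbhd m v|.
Hypothesis card_B : #|B| <= 2 * k.
Hypothesis B'_neq0 : B' != set0.
Hypothesis card_B' : #|B'| <= k.

Lemma modify_is_mgraph : is_mgraph m'.
Proof. exact: modify_mgraph mG v_notin_U v_notin_B'. Qed.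

Section Backward.
Variable X' : {set V}.
Hypotheses (feasX' : feasible m' k X') (vNX' : v \notin X').
Local Notation E := (comp_of m' X' v).

Lemma comp_v_is_comp : is_comp m' X' E.
Proof. exact: comp_of_is_comp modify_is_mgraph vNX'. Qed.

Lemma B'_subset_X' : B' \subset X'.
Proof.
apply/subsetP => b bB'; apply/negPn/negP => bX.
have mvb : m' v b = (m v b).+2.
  by rewrite (modify_B' bB' (B_notin_U (subsetP B'B b bB')) v_notin_U) addn2.
have vE := mem_comp_of m' X' v.
have bE : b \in E by apply: comp_adj_closed comp_v_is_comp vE _ bX; rewrite /adj mvb.
have vb : v != b by apply: contraNneq v_notin_B' => ->.
have [_ /(_ _ comp_v_is_comp)[cl|[_ [_ nc]]]] := feasX'.
  by move: (cl v b vE bE vb); rewrite mvb.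
by apply: nc; exists [:: v; b]; rewrite /is_cycle /= inE vb vE bE mvb.
Qed.

Lemma clique_comp_v_nbrs : induces_clique m' E ->
  #|[set u in nbhd m' v | (u \notin X') && (u \notin B)]| <= 1.
Proof.
move=> cl; set A := [set u in _ | _].
have Anbr u : u \in A -> [/\ u \in E, u != v, adj m v u & u \notin B].
  move=> /setIdP[vu /andP[uX uB]]; rewrite inE in vu.
  have uU : u \notin U.
    by apply: contraTN vu => uU; rewrite /adj (modify_U uU).1.
  split=> //.
  - exact: comp_adj_closed comp_v_is_comp (mem_comp_of m' X' v) vu uX.
  - by apply: contraTneq vu => ->; rewrite adj_irr //; exact: modify_is_mgraph.
  - have uB' : u \notin B' by apply: contra uB => /(subsetP B'B).
    by move: vu; rewrite /adj (modify_off v_notin_U uU v_notin_B' uB').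
rewrite leqNgt; apply/negP => /card_gt1P[a [c [/Anbr[aE av va aB] /Anbr[cE cv vc cB] ac]]].
have acm : adj m a c by move: (cl a c aE cE ac); rewrite modify_off_v // /adj => ->.
apply: no_cycle_v; exists [:: v; a; c]; split; last exact: mem_head.
apply: is_cycle_cons => /=.
- by rewrite !inE negb_or eq_sym av eq_sym cv ac.
- by rewrite va acm.
- by rewrite adj_sym.
- by [].
- by rewrite !inE vNB aB cB.
Qed.

Lemma comp_v_not_clique : ~ induces_clique m' E.
Proof.
move=> cl; set A := [set u in nbhd m' v | (u \notin X') && (u \notin B)].
have A1 : #|A| <= 1 := clique_comp_v_nbrs cl.
have Nsub : nbhd m v \subset ((A :|: X') :|: B) :|: (nbhd m v :&: U).
  apply/subsetP => u; rewrite !inE => uN.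
  case: (boolP (u \in U)) => uU; first by rewrite uN !orbT.
  case: (boolP (u \in X')) => uX; first by rewrite !orbT.
  case: (boolP (u \in B)) => uB; first by rewrite !orbT.
  have uB' : u \notin B' by apply: contra uB => /(subsetP B'B).
  by rewrite /adj (modify_off v_notin_U uU v_notin_B' uB') /= !(andbT, andbF, orbF).
have B'pos : 0 < #|B'| by rewrite card_gt0.
have := subset_leq_card Nsub; have := card_nbhd_U.
have := (leq_card_setU (A :|: X' :|: B) (nbhd m v :&: U)).1.
have := (leq_card_setU (A :|: X') B).1; have := (leq_card_setU A X').1.
have [cardX' _] := feasX'; lia.
Qed.

Lemma comp_v_tree : induces_tree m' E.
Proof. by have [_ /(_ _ comp_v_is_comp)[/comp_v_not_clique|]] := feasX'. Qed.

Lemma comp_notin_B' D y : is_comp m X' D -> y \in D -> y \notin B'.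
Proof. by move=> cD /(comp_notin cD); apply: contra => /(subsetP B'_subset_X'). Qed.

Section CompContainingV.
Variable D : {set V}.
Hypotheses (cD : is_comp m X' D) (vD : v \in D).

Lemma agree_comp_off_U : agree m m' (D :\: U).
Proof.
by apply: agree_modify_off => y; rewrite inE => /andP[-> yD]; rewrite (comp_notin_B' cD).
Qed.

Lemma C'_adj_closed C a b :
  C \in C' -> a \in C -> b \in D -> b != v -> adj m a b -> b \in C.
Proof.
move=> CC aC bD bv ab; have [[_ _ _ bd] _ _ _] := C'_tree_comp CC.
apply/negPn/negP => bC; case: (boolP (b \in B)) => bB.
  by move: (comp_notin_B' cD bD); rewrite (C'_nbr_B CC aC bB ab).
by move: (bd a b aC bC); rewrite !inE negb_or bv bB ab => /(_ isT).
Qed.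

Lemma path_in_C' C x s : C \in C' -> path (adj m) x s -> all [in D :\ v] (x :: s) ->
  has [in C] (x :: s) -> all [in C] (x :: s).
Proof.
move=> CC ps Ds /hasP[z zs zC].
have step a b : a \in D :\ v -> b \in D :\ v -> adj m a b -> (a \in C) = (b \in C).
  rewrite !inE => /andP[av aD] /andP[bv bD] ab; apply/idP/idP => [aC|bC].
    exact: C'_adj_closed CC aC bD bv ab.
  by apply: C'_adj_closed CC bC aD av _; rewrite adj_sym.
have same := path_constant ps Ds step.
by apply/allP => y ys; rewrite /= same // -(same z zs).
Qed.

Lemma comp_off_U_sub_comp_v y : y \in D -> y \notin U -> y \in E.
Proof.
move=> yD yU; have [_ _ conD _] := cD.
have [p [pp up lp]] := connected_set_uniq_path conD vD yD.
have pD := path_restr_mem pp.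
have pU : ~~ has [in U] p.
  case: p pp up lp pD => [//|z p] /andP[_ pp] /andP[vzp _] lp zpD.
  apply/negP => /hasP[w wp /bigcupP[C CC wC]]; move/negP: yU; apply.
  apply/bigcupP; exists C => //.
  have Dzp : all [in D :\ v] (z :: p).
    apply/allP => u uzp; rewrite !inE (allP zpD u uzp) andbT.
    by apply: contraNneq vzp => <-.
  have /allP := path_in_C' CC (path_restr_adj pp) Dzp (introT hasP (ex_intro2 _ _ w wp wC)).
  by move/(_ _ (mem_last z p)); rewrite -lp.
have DUsub : {in D :\: U &, subrel (restr m D) (restr m' (~: X'))}.
  move=> a b aDU bDU /and3P[_ _ ab]; rewrite /restr !inE.
  rewrite (comp_notin cD (setDP aDU).1) (comp_notin cD (setDP bDU).1).
  by rewrite /adj -(agree_comp_off_U aDU bDU); exact: ab.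
have vpDU : all [in D :\: U] (v :: p).
  apply/allP => u; rewrite in_cons inE => /predU1P[->|up']; first by rewrite vD v_notin_U.
  by rewrite (allP pD u up') (hasPn pU u up').
by rewrite inE; apply/connectP; exists p => //; apply: (sub_in_path DUsub vpDU pp).
Qed.

Lemma comp_containing_v_tree : induces_tree m D.
Proof.
have [Dne _ conD _] := cD; split=> //; split=> // -[c cc].
have /allP cD' := is_cycle_mem cc.
case: (boolP (has [in U] c)) => [/hasP[z zc /bigcupP[C CC zC]]|/hasPn cU].
  have [_ [_ [_ ncC]] vC BC] := C'_tree_comp CC.
  have zv : z != v by apply: contraNneq vC => <-.
  have [x [s [ps cs]]] := cycle_path_avoiding (is_cycle_cycle mG cc) (is_cycle_uniq cc) zc zv.
  have /allP sC : all [in C] (x :: s).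
    apply: path_in_C' CC ps _ _; last by apply/hasP; exists z; rewrite ?cs ?inE ?zv.
    by apply/allP => y; rewrite cs !inE => /andP[-> /cD'].
  have cC y : y \in c -> y != v -> y \in C by move=> yc yv; apply: sC; rewrite cs inE yv.
  case: (boolP (v \in c)) => vc.
    apply: no_cycle_v; exists c; split=> //; apply: (is_cycle_widen cc).
    apply/allP => y yc; rewrite inE; have [->//|yv] := eqVneq y v.
    exact: contraL (BC y) (cC y yc yv).
  apply: ncC; exists c; apply: (is_cycle_widen cc); apply/allP => y yc.
  by apply: (cC y yc); apply: contraNneq vc => <-.
have [_ [_ ncE]] := comp_v_tree; apply: ncE; exists c.
have cDU : all [in D :\: U] c by apply/allP => y yc; rewrite inE cU ?cD'.
apply: (is_cycle_widen (is_cycle_agree agree_comp_off_U (is_cycle_widen cc cDU))).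
by apply/allP => y /(allP cDU); rewrite inE => /andP[yU yD]; apply: comp_off_U_sub_comp_v.
Qed.

End CompContainingV.

Lemma backward_comp D : is_comp m X' D -> induces_clique m D \/ induces_tree m D.
Proof.
move=> cD; case: (boolP (v \in D)) => vD; first by right; exact: comp_containing_v_tree.
have agD : agree m m' D := agree_modify_off_v vD.
have cD' : is_comp m' X' D.
  apply: (is_comp_agree agD _ cD) => x y xD yX.
  have xv : x != v by apply: contraNneq vD => <-.
  have [->|yv] := eqVneq y v; last by rewrite /adj modify_off_v.
  case: (boolP (x \in U)) => xU; first by rewrite /adj (modify_U xU).2.
  by rewrite /adj (modify_off xU v_notin_U (comp_notin_B' cD xD) v_notin_B').
have [_ /(_ _ cD')[cl|tr]] := feasX'; [left|right].
  exact: clique_agree (agree_sym agD) cl.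
exact: tree_agree (agree_sym agD) tr.
Qed.

End Backward.

Lemma yes_instance_of_modify : yes_instance m' k -> yes_instance m k.
Proof.
move=> [X' feasX']; exists X'; case: (boolP (v \in X')) => vX.
  by apply: feasible_agree feasX'; apply/agree_sym/agree_modify_off_v; rewrite inE vX.
by split=> [|D]; [case: feasX' | exact: backward_comp].
Qed.

End Reduction.

Theorem mainTheorem9 (V : finType) (m : V -> V -> nat) (k : nat) (v : V)
    (B : {set V}) (Ctree : {set {set V}}) (B' : {set V})
    (C' : {set {set V}}) :
  is_mgraph m ->
  large_sparse m k v ->
  v \notin B -> #|B| <= 2 * k ->
  ~ (exists c, is_cycle m (~: B) c /\ v \in c) ->
  (forall C, C \in Ctree <-> in_Ctree m v B C) ->
  4 * k <= #|Ctree| ->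
  (forall C, C \in Ctree -> exists x b, [/\ x \in C, b \in B & adj m x b]) ->
  B' \subset B -> C' \subset Ctree -> B' != set0 -> C' != set0 ->
  #|B'| <= k ->
  (forall C x b, C \in C' -> x \in C -> b \in B -> adj m x b -> b \in B') ->
  (exists f : {set V} -> V,
      (forall C, C \in C' -> f C \in B' /\ exists x, x \in C /\ adj m (f C) x) /\
      (forall b, b \in B' -> #|[set C in C' | f C == b]| = 2)) ->
  yes_instance m k <-> yes_instance (modify m v C' B') k.
Proof.
move=> mG [large_nbhd _] vNB card_B no_cycle_v CtreeP _ _ B'B C'Ctree B'_neq0 _
  card_B' C'_nbr_B [f [fP f_fibres]].
split; first exact: (yes_instance_modify mG vNB CtreeP B'B C'Ctree C'_nbr_B fP f_fibres).
exact: (yes_instance_of_modify mG vNB no_cycle_v CtreeP B'B C'Ctree C'_nbr_B fP f_fibres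
  large_nbhd card_B B'_neq0 card_B').
Qed.
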